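(* For every $n$-cell regular network, there exist special Jordan subspaces $J_1,\dots,J_m$ to the network such that $\mathbb{C}^n=J_1\oplus\cdots\oplus J_m$.
   Context: A regular network is a finite directed graph on cells $1,\dots,n$ (loops and multiple arrows allowed) in which every cell receives the same number $v$ of arrows (the valency). Its adjacency matrix $A=[a_{ij}]$ has $a_{ij}$ equal to the number of arrows cell $i$ receives from cell $j$; every row sum is $v$. $A$ acts on $\mathbb{C}^n$. A polydiagonal is a subspace of $\mathbb{C}^n$ of the form $\{x : x_i=x_j \text{ for all } (i,j)\in R\}$ for some (possibly empty) set $R$ of index pairs. $F=\{x_1=\cdots=x_n\}$ is the fully synchrony subspace. $P(W)$ is the smallest polydiagonal containing a subspace $W$. For an eigenvalue $\lambda$ of $A$, the generalized eigenspace is $G_\lambda=\operatorname{Ker}(A-\lambda I)^p$ for $p$ large. A Jordan chain of length $k$ for $\lambda$ is a sequence of nonzero vectors $x_1,\dots,x_k$ with $(A-\lambda I)x_1=0$ and $(A-\lambda I)x_i=x_{i-1}$ for $2\le i\le k$; a Jordan subspace is the span of a Jordan chain. A Jordan subspace $W$ of a generalized eigenspace $G$ is a special Jordan subspace to the network if for every Jordan subspace $U$ of $G$ with $\dim U=\dim W$ and $P(U)\subseteq P(W)$, either $P(U)=P(W)$ or $U=F$. *)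

From HB Require Import structures.
From mathcomp Require Import all_boot all_order all_algebra.
Set Implicit Arguments. Unset Strict Implicit. Unset Printing Implicit Defensive.
Import Order.TTheory GRing.Theory Num.Theory.
Local Open Scope ring_scope.

(* A regular network on n cells: adjacency matrix with natural-number entries
   (a_ij = number of arrows cell i receives from cell j), all row sums equal. *)
Definition regular_network (n : nat) (A : 'M[nat]_n) : Prop :=
  exists v : nat, forall i : 'I_n, (\sum_(j < n) A i j)%N = v.

Definition adjC (C : numClosedFieldType) (n : nat) (A : 'M[nat]_n) : 'M[C]_n :=
  map_mx (fun k : nat => k%:R) A.

(* Vectors of C^n are row vectors 'rV[C]_n; A acts by x |-> x *m A^T
   (i.e. the column action A x). Subspaces are row spaces of matrices. *)

Definition in_polydiag (C : numClosedFieldType) (n : nat) (R : rel 'I_n)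
  (x : 'rV[C]_n) : Prop :=
  forall i j : 'I_n, R i j -> x 0 i = x 0 j.

Definition in_Pclosure (C : numClosedFieldType) (n m : nat) (W : 'M[C]_(m, n))
  (x : 'rV[C]_n) : Prop :=
  forall R : rel 'I_n,
    (forall w : 'rV[C]_n, (w <= W)%MS -> in_polydiag R w) -> in_polydiag R x.

Definition Psub (C : numClosedFieldType) (n m1 m2 : nat)
  (U : 'M[C]_(m1, n)) (W : 'M[C]_(m2, n)) : Prop :=
  forall x : 'rV[C]_n, in_Pclosure U x -> in_Pclosure W x.

Definition Peq (C : numClosedFieldType) (n m1 m2 : nat)
  (U : 'M[C]_(m1, n)) (W : 'M[C]_(m2, n)) : Prop :=
  Psub U W /\ Psub W U.

Definition fullsync (C : numClosedFieldType) (n : nat) : 'rV[C]_n := const_mx 1.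

Definition jordan_chain (C : numClosedFieldType) (n : nat) (A : 'M[C]_n)
  (lam : C) (k : nat) (X : 'M[C]_(k, n)) : Prop :=
  (forall i : 'I_k, row i X != 0) /\
  (forall i : 'I_k, nat_of_ord i = 0%N -> row i X *m (A - lam%:M)^T = 0) /\
  (forall i j : 'I_k, nat_of_ord i = (nat_of_ord j).+1 ->
     row i X *m (A - lam%:M)^T = row j X).

Definition jordan_subspace (C : numClosedFieldType) (n : nat) (A : 'M[C]_n)
  (lam : C) (W : 'M[C]_n) : Prop :=
  exists (k : nat) (X : 'M[C]_(k, n)),
    (0 < k)%N /\ jordan_chain A lam X /\ (W == X)%MS.

Definition special_jordan (C : numClosedFieldType) (n : nat) (A : 'M[C]_n)
  (lam : C) (W : 'M[C]_n) : Prop :=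
  jordan_subspace A lam W /\
  forall U : 'M[C]_n, jordan_subspace A lam U ->
    \rank U = \rank W -> Psub U W ->
    Peq U W \/ (U == fullsync C n)%MS.

From HB Require Import structures.
From mathcomp Require Import all_boot all_order all_algebra.
From Stdlib Require Import Classical.
From mathcomp Require Import zify ring.
Set Implicit Arguments. Unset Strict Implicit. Unset Printing Implicit Defensive.
Import Order.TTheory GRing.Theory Num.Theory.
Local Open Scope ring_scope.

(* Vectors are row vectors, A acts by x |-> x *m A^T, so for an eigenvalue
   lam the relevant nilpotent operator is N = (A - lam)^T.
   - The polydiagonal closure P(W) is described by the pattern of W, the pairs
     of cells on which all vectors of W agree; P(U) <= P(W) iff the pattern
     of W is contained in that of U.
   - Jordan chains of length k are exactly the Krylov matrices x N^(k-1), ...,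
     x N, x of chain tops x (x N^k = 0 <> x N^(k-1)); a chain top is special
     when no chain of the same length has a strictly coarser pattern, except
     the full synchrony line, and then its Krylov space is special.
   - For a regular network, the full synchrony vector is never the bottom of
     a chain of length 2 (maximum principle).
   - Key lemma: ker N^k is spanned modulo ker N^(k-1) by special tops, by
     induction on the number of pairs of cells a vector separates.
   - A top-down construction turns this into chains of special tops whose
     Krylov spaces span each generalized eigenspace with total length its
     dimension; refining the generalized eigenspace decomposition of C^n by
     these families gives the theorem by a dimension count. *)

Section Patterns.
Variables (C : numClosedFieldType) (n : nat).

(* The pattern of B relates the cells i, j on which all rows of B agree.  The
   smallest polydiagonal P(B) is the polydiagonal of this relation. *)
Definition pattern m (B : 'M[C]_(m, n)) : rel 'I_n :=
  fun i j => [forall r, B r i == B r j].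

Lemma patternP m (B : 'M[C]_(m, n)) i j :
  reflect (forall r, B r i = B r j) (pattern B i j).
Proof. by apply: (iffP forallP) => H r; apply/eqP/H. Qed.

Lemma pattern_refl m (B : 'M[C]_(m, n)) i : pattern B i i.
Proof. by apply/patternP. Qed.

Lemma pattern_sym m (B : 'M[C]_(m, n)) i j : pattern B i j -> pattern B j i.
Proof. by move/patternP=> H; apply/patternP=> r; rewrite H. Qed.

Lemma pattern_trans m (B : 'M[C]_(m, n)) i j l :
  pattern B i j -> pattern B j l -> pattern B i l.
Proof. by move=> /patternP H1 /patternP H2; apply/patternP=> r; rewrite H1 H2. Qed.

Lemma pattern_submx m (B : 'M[C]_(m, n)) (u : 'rV[C]_n) i j :
  (u <= B)%MS -> pattern B i j -> u 0 i = u 0 j.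
Proof.
by case/submxP=> c -> /patternP H; rewrite !mxE; apply: eq_bigr => r _; rewrite H.
Qed.

Lemma pattern_subset m1 m2 (U : 'M[C]_(m1, n)) (W : 'M[C]_(m2, n)) :
  (U <= W)%MS -> subrel (pattern W) (pattern U).
Proof.
move=> sUW i j Wij; apply/patternP => r.
by have := pattern_submx (submx_trans (row_sub r U) sUW) Wij; rewrite !mxE.
Qed.

Lemma in_PclosureE m (W : 'M[C]_(m, n)) x :
  in_Pclosure W x <-> (forall i j, pattern W i j -> x 0 i = x 0 j).
Proof.
split=> [H i j Wij | H R HR i j Rij].
  by apply: (H (pattern W)) => // w Hw a b; apply: pattern_submx.
apply: H; apply/patternP => r.
by have := HR (row r W) (row_sub r W) i j Rij; rewrite !mxE.
Qed.

(* Inclusion of polydiagonal closures is reverse inclusion of patterns; for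
   the direct implication, test P(U) <= P(W) on the indicator vector of the
   pattern class of a cell i. *)
Lemma PsubE m1 m2 (U : 'M[C]_(m1, n)) (W : 'M[C]_(m2, n)) :
  Psub U W <-> subrel (pattern W) (pattern U).
Proof.
split=> [H i j Wij | H x /in_PclosureE Hx]; last first.
  by apply/in_PclosureE => i j /H; apply: Hx.
pose x : 'rV[C]_n := \row_l (pattern U i l)%:R.
have Ux : in_Pclosure U x.
  apply/in_PclosureE => a b Uab; rewrite !mxE.
  suff -> : pattern U i a = pattern U i b by [].
  apply/idP/idP => [Uia|Uib]; first exact: pattern_trans Uia Uab.
  exact: pattern_trans Uib (pattern_sym Uab).
have := (proj1 (in_PclosureE W x) (H x Ux)) i j Wij.
by rewrite !mxE pattern_refl; case: (pattern U i j) => //= /eqP; rewrite oner_eq0.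
Qed.

Lemma Psub_eqmx m1 m2 m3 m4 (U : 'M[C]_(m1, n)) (U' : 'M[C]_(m2, n))
  (W : 'M[C]_(m3, n)) (W' : 'M[C]_(m4, n)) :
  (U == U')%MS -> (W == W')%MS -> Psub U W -> Psub U' W'.
Proof.
move=> /andP[_ sU'U] /andP[sWW' _] /PsubE sPUW; apply/PsubE => i j W'ij.
exact/(pattern_subset sU'U)/sPUW/(pattern_subset sWW').
Qed.

End Patterns.

Section Krylov.
Variables (R : fieldType) (n : nat) (N : 'M[R]_n).
Implicit Types (x u : 'rV[R]_n).

Lemma mulmx_exprD x a b : x *m N ^+ (a + b) = x *m N ^+ a *m N ^+ b.
Proof. by rewrite exprD -mulmxE mulmxA. Qed.

Lemma mulmx_exprS x a : x *m N ^+ a.+1 = x *m N ^+ a *m N.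
Proof. by rewrite exprSr -mulmxE mulmxA. Qed.

Lemma mulmx_expr_eq0 x k e : x *m N ^+ k = 0 -> (k <= e)%N -> x *m N ^+ e = 0.
Proof. by move=> xNk /subnKC <-; rewrite mulmx_exprD xNk mul0mx. Qed.

(* The Krylov matrix of length k of x has rows x N^(k-1), ..., x N, x; in
   this order its rows form a Jordan chain when x is a chain top. *)
Definition krylov k x : 'M[R]_(k, n) :=
  \matrix_(r < k, j < n) (x *m N ^+ (k.-1 - r)) 0 j.

Lemma row_krylov k x (r : 'I_k) : row r (krylov k x) = x *m N ^+ (k.-1 - r).
Proof. by apply/rowP => j; rewrite !mxE. Qed.

Lemma krylov_entry k x r j : krylov k x r j = (x *m N ^+ (k.-1 - r)) 0 j.
Proof. by rewrite mxE. Qed.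

Lemma krylov_row k x e : (e < k)%N -> (x *m N ^+ e <= krylov k x)%MS.
Proof.
move=> lt_e_k; have lt : (k.-1 - e < k)%N by lia.
rewrite (_ : x *m N ^+ e = row (Ordinal lt) (krylov k x)) ?row_sub //.
by rewrite row_krylov /=; congr (_ *m _ ^+ _); lia.
Qed.

Definition chain_top k x := (x *m N ^+ k == 0) && (x *m N ^+ k.-1 != 0).

Lemma chain_top_gt0 k x : chain_top k x -> (0 < k)%N.
Proof. by case: k => // /andP[/eqP ->]; rewrite eqxx. Qed.

Lemma krylov_stable k x : x *m N ^+ k = 0 -> stablemx (krylov k x) N.
Proof.
move=> xNk; apply/row_subP => r; rewrite row_mul row_krylov -mulmx_exprS.
have := ltn_ord r; case: (posnP r) => [r0|r_gt0] r_lt_k.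
  by rewrite (mulmx_expr_eq0 xNk) ?sub0mx //; lia.
by rewrite krylov_row //; lia.
Qed.

Lemma krylov_mulmx_expr k x u e : x *m N ^+ k = 0 ->
  (u <= krylov k x)%MS -> (u *m N ^+ e <= krylov k x)%MS.
Proof.
move=> xNk sux; elim: e => [|e IH]; first by rewrite expr0 mulmx1.
by rewrite mulmx_exprS; apply: submx_trans (krylov_stable xNk); apply: submxMr.
Qed.

Lemma krylov_ker k x u : x *m N ^+ k = 0 -> (u <= krylov k x)%MS -> u *m N ^+ k = 0.
Proof.
move=> xNk /submxP[c ->]; rewrite -mulmxA.
suff -> : krylov k x *m N ^+ k = 0 by rewrite mulmx0.
apply/row_matrixP => r; rewrite row_mul row_krylov row0 -mulmx_exprD.
by apply: (mulmx_expr_eq0 xNk); lia.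
Qed.

Lemma krylov_sub_ker k x : x *m N ^+ k = 0 ->
  (krylov k x <= kermx (N ^+ k.-1) + x)%MS.
Proof.
move=> xNk; apply/row_subP => r; rewrite row_krylov.
case: (posnP (k.-1 - r)%N) => [->|e_gt0]; first by rewrite expr0 mulmx1 addsmxSr.
apply: submx_trans (addsmxSl _ _); apply/sub_kermxP; rewrite -mulmx_exprD.
by apply: (mulmx_expr_eq0 xNk); lia.
Qed.

(* The vectors of a chain are independent: multiplying a vanishing combination
   by N^r isolates the coefficient of row r, by decreasing induction on r. *)
Lemma krylov_row_free k x : chain_top k x -> row_free (krylov k x).
Proof.
case/andP=> /eqP xNk xNk1; apply/inj_row_free => c c_ker.
have coef0 d : forall r : 'I_k, (k.-1 - r < d)%N -> c 0 r = 0.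
  elim: d => // d IH r lt_d.
  have : c *m krylov k x *m N ^+ r = 0 by rewrite c_ker mul0mx.
  rewrite (mulmx_sum_row c) mulmx_suml (bigD1 r) //= big1 ?addr0 => [|r' r'r].
    rewrite row_krylov -scalemxAl -mulmx_exprD subnK; last by have := ltn_ord r; lia.
    by move/eqP; rewrite scalemx_eq0 (negbTE xNk1) orbF => /eqP.
  rewrite row_krylov -scalemxAl -mulmx_exprD.
  have := ltn_ord r; have := ltn_ord r'; have [r'_lt_r|r_le_r'] := ltnP r' r => lt_r' lt_r.
    by rewrite (mulmx_expr_eq0 xNk) ?scaler0 //; lia.
  have r'_neq_r : (r' : nat) != r by [].
  by rewrite IH ?scale0r //; lia.
by apply/rowP => r; rewrite mxE (coef0 k) //; have := ltn_ord r; lia.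
Qed.

Lemma krylov_rank k x : chain_top k x -> \rank (krylov k x) = k.
Proof. by move/krylov_row_free/eqP. Qed.

End Krylov.

Section JordanChains.
Variables (C : numClosedFieldType) (n : nat) (A : 'M[C]_n) (lam : C).
Let N := (A - lam%:M)^T.

Lemma krylov_jordan_chain k x : chain_top N k x -> jordan_chain A lam (krylov N k x).
Proof.
case/andP=> /eqP xNk xNk1; split; [|split].
- move=> i; rewrite row_krylov; apply: contra xNk1 => /eqP xN0.
  have := ltn_ord i => lt_i.
  by rewrite -(subnK (_ : (i <= k.-1)%N)) ?mulmx_exprD ?xN0 ?mul0mx //; lia.
- move=> i i0; rewrite row_krylov i0 subn0 -mulmx_exprS.
  by rewrite prednK ?xNk //; have := ltn_ord i; lia.
- move=> i j ij; rewrite !row_krylov -mulmx_exprS; congr (_ *m _ ^+ _).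
  by have := ltn_ord i; lia.
Qed.

Lemma jordan_chain_krylov k (X : 'M[C]_(k, n)) : (0 < k)%N ->
  jordan_chain A lam X -> exists2 x, X = krylov N k x & chain_top N k x.
Proof.
move=> k_gt0 [X_nz [X_bot X_succ]].
have lt_last : (k.-1 < k)%N by lia.
pose last := Ordinal lt_last.
have rowX d (r : 'I_k) : (k.-1 - r)%N = d -> row r X = row last X *m N ^+ d.
  elim: d r => [|d IH] r r_d.
    by rewrite expr0 mulmx1; congr row; apply: val_inj => /=; have := ltn_ord r; lia.
  have lt : (r.+1 < k)%N by have := ltn_ord r; lia.
  by rewrite -(X_succ (Ordinal lt) r) // (IH (Ordinal lt)) /= -?mulmx_exprS //; lia.
have EX : X = krylov N k (row last X).
  by apply/row_matrixP => r; rewrite row_krylov (rowX (k.-1 - r)%N r).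
have bot : row last X *m N ^+ k.-1 = row (Ordinal k_gt0) X.
  by rewrite (rowX k.-1 (Ordinal k_gt0)) //= subn0.
exists (row last X) => //; rewrite /chain_top bot X_nz andbT.
have -> : N ^+ k = N ^+ k.-1 * N by rewrite -exprSr prednK.
by rewrite -mulmxE mulmxA bot X_bot.
Qed.

Definition special_top k x := chain_top N k x /\ forall y, chain_top N k y ->
  subrel (pattern (krylov N k x)) (pattern (krylov N k y)) ->
  subrel (pattern (krylov N k y)) (pattern (krylov N k x)) \/
  (krylov N k y == fullsync C n)%MS.

Lemma special_top_special k x :
  special_top k x -> special_jordan A lam <<krylov N k x>>%MS.
Proof.
move=> [top_x x_special]; have k_gt0 := chain_top_gt0 top_x.
have EK : (<<krylov N k x>> == krylov N k x)%MS by apply/eqmxP; apply: genmxE.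
have EK' : (krylov N k x == <<krylov N k x>>)%MS by apply/eqmxP; apply: eqmx_sym; apply: genmxE.
split; first by exists k, (krylov N k x); do 2?split=> //; apply: krylov_jordan_chain.
move=> U [k' [Y [k'_gt0 [chainY EU]]]] rkU sPUK.
have [y EY top_y] := jordan_chain_krylov k'_gt0 chainY; subst Y.
have Ek : k' = k.
  by rewrite -(krylov_rank top_y) -(eqmx_rank EU) rkU mxrank_gen krylov_rank.
subst k'; have EU' : (krylov N k y == U)%MS by apply/eqmxP; apply: eqmx_sym; apply/eqmxP.
have /PsubE sPyx : Psub (krylov N k y) (krylov N k x) by apply: Psub_eqmx EU EK sPUK.
case: (x_special y top_y sPyx) => [sPxy | Fy].
  by left; split=> //; apply: Psub_eqmx EK' EU' _; apply/PsubE.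
by right; apply/eqmxP; apply: eqmx_trans (eqmxP EU) (eqmxP Fy).
Qed.

End JordanChains.

Lemma real_argmax (C : numFieldType) (I : finType) (f : I -> C) (i0 : I) :
  (forall i, f i \is Num.real) -> exists im, forall i, f i <= f im.
Proof.
move=> f_real; suff [im max_im] : exists im, forall i, i \in enum I -> f i <= f im.
  by exists im => i; apply: max_im; rewrite mem_enum.
elim: (enum I) => [|a s [im IH]]; first by exists i0.
have [le_a|le_im] := orP (real_leVge (f_real a) (f_real im)).
  by exists im => i; rewrite inE => /orP[/eqP ->|/IH].
exists a => i; rewrite inE => /orP[/eqP ->|/IH le_i]; first exact: lexx.
exact: le_trans le_i le_im.
Qed.

Section SyncVector.
Variables (C : numClosedFieldType) (n : nat) (A : 'M[nat]_n) (v : nat).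
Hypothesis rowsumA : forall i, (\sum_(j < n) A i j)%N = v.
Variable lam : C.
Let N := (adjC C A - lam%:M)^T.

Lemma mulmx_adj_entry (u : 'rV[C]_n) i :
  (u *m N) 0 i = \sum_j u 0 j * (A i j)%:R - lam * u 0 i.
Proof.
rewrite mxE (eq_bigr (fun j => u 0 j * (A i j)%:R - lam * (u 0 j * (i == j)%:R))).
  rewrite sumrB -mulr_sumr; congr (_ - lam * _).
  rewrite (bigD1 i) //= eqxx mulr1 big1 ?addr0 // => j ji.
  by rewrite eq_sym (negbTE ji) mulr0.
by move=> j _; rewrite !mxE -mulr_natr; ring.
Qed.

Lemma sync_mulN_entry i : (fullsync C n *m N) 0 i = v%:R - lam.
Proof.
rewrite mulmx_adj_entry; under eq_bigr => j _ do rewrite mxE mul1r.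
by rewrite -natr_sum rowsumA mxE mulr1.
Qed.

(* Maximum principle: at a maximal entry of a real vector w, (A w)_i <= v w_i,
   so A w - v w cannot be the all-one vector. *)
Lemma no_constant_excess (w : 'I_n -> C) (i0 : 'I_n) :
  (forall i, w i \is Num.real) ->
  ~ (forall i, \sum_j w j * (A i j)%:R - v%:R * w i = 1).
Proof.
move=> w_real excess; have [im max_im] := real_argmax i0 w_real.
have : \sum_j w j * (A im j)%:R <= v%:R * w im.
  rewrite -(rowsumA im) natr_sum mulr_suml; apply: ler_sum => j _.
  by rewrite mulrC; apply: ler_wpM2l; [apply: ler0n | apply: max_im].
by rewrite -subr_le0 excess ler10.
Qed.

(* The full synchrony vector is never the bottom of a Jordan chain of length
   2: otherwise A z - v z = c 1 with c <> 0, and the real part of z / c would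
   violate the maximum principle. *)
Lemma sync_not_chain_bottom (z : 'rV[C]_n) : z *m N *m N = 0 ->
  (forall i j, (z *m N) 0 i = (z *m N) 0 j) -> z *m N = 0.
Proof.
move=> zNN zN_const; apply/eqP/negPn/negP => zN_nz.
have /rV0Pn[i0 zNi0] := zN_nz.
set c := (z *m N) 0 i0 in zNi0.
have zN_sync : z *m N = c *: fullsync C n.
  by apply/rowP => j; rewrite (zN_const j i0) -/c !mxE mulr1.
have lam_v : lam = v%:R.
  have /eqP := zNN; rewrite zN_sync -scalemxAl scalemx_eq0 (negbTE zNi0) /=.
  by move=> /eqP/rowP/(_ i0); rewrite sync_mulN_entry mxE => /eqP; rewrite subr_eq0 => /eqP.
pose w i := 'Re (z 0 i / c).
apply: (no_constant_excess i0 (fun i => Creal_Re _ : w i \is Num.real)) => i.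
have zNi : \sum_j z 0 j * (A i j)%:R - v%:R * z 0 i = c.
  by rewrite -lam_v -mulmx_adj_entry zN_sync !mxE mulr1.
have Re1 : 'Re (1 : C) = 1 by apply/Creal_ReP; apply: rpred1.
transitivity ('Re ((\sum_j z 0 j * (A i j)%:R - v%:R * z 0 i) / c)).
  rewrite mulrBl mulr_suml raddfB raddf_sum /=.
  congr (_ - _); first by apply: eq_bigr => j _; rewrite /w -ReMr ?realn // mulrAC.
  by rewrite /w -mulrA [RHS](ReMl (realn _ v)).
by rewrite zNi divff // Re1.
Qed.

End SyncVector.

Section SeqSpan.
Variables (R : fieldType) (n : nat).
Implicit Types (s : seq 'rV[R]_n).

Definition vspan s : 'M[R]_n := (\sum_(u <- s) <<u>>)%MS.

Lemma vspan_nil : vspan [::] = 0.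
Proof. by rewrite /vspan big_nil. Qed.

Lemma vspan_cons u s : vspan (u :: s) = (<<u>> + vspan s)%MS.
Proof. by rewrite /vspan big_cons. Qed.

Lemma vspan_cat s1 s2 : vspan (s1 ++ s2) = (vspan s1 + vspan s2)%MS.
Proof. by rewrite /vspan big_cat. Qed.

Lemma vspan_sup s u : u \in s -> (u <= vspan s)%MS.
Proof.
elim: s => // v s IH; rewrite inE vspan_cons => /orP[/eqP ->|/IH su].
  by apply: submx_trans (addsmxSl _ _); rewrite genmxE.
exact: submx_trans su (addsmxSr _ _).
Qed.

Lemma vspan_subP s m (B : 'M[R]_(m, n)) :
  (forall u, u \in s -> (u <= B)%MS) -> (vspan s <= B)%MS.
Proof.
elim: s => [|v s IH] sB; first by rewrite vspan_nil sub0mx.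
rewrite vspan_cons addsmx_sub genmxE (sB v (mem_head v s)) IH // => u su.
by apply: sB; rewrite inE su orbT.
Qed.

End SeqSpan.

Section SpecialTopsSpan.
Variables (C : numClosedFieldType) (n : nat) (A : 'M[C]_n) (lam : C).
Let N := (A - lam%:M)^T.
Hypothesis sync_not_bottom : forall z : 'rV[C]_n, z *m N *m N = 0 ->
  (forall i j, (z *m N) 0 i = (z *m N) 0 j) -> z *m N = 0.
Variables (k : nat).
Hypothesis k_gt0 : (0 < k)%N.
Local Notation K := (krylov N k).
Implicit Types (x y w : 'rV[C]_n).

(* The levels m = k-1, ..., 0 are fixed in turn, level
   k-1-d by a multiple of y N^d, which leaves the higher levels unchanged. *)
Lemma merge_pair y x i0 j0 : y *m N ^+ k = 0 ->
  (y *m N ^+ k.-1) 0 i0 != (y *m N ^+ k.-1) 0 j0 ->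
  exists2 w, (w - x <= K y)%MS &
    forall m, (m < k)%N -> (w *m N ^+ m) 0 i0 = (w *m N ^+ m) 0 j0.
Proof.
move=> yNk sep; pose gap (u : 'rV[C]_n) := u 0 i0 - u 0 j0.
have gapB u a u' : gap (u - a *: u') = gap u - a * gap u'.
  by rewrite /gap !mxE; ring.
suff /(_ k (leqnn k))[w xw agree] : forall d, (d <= k)%N -> exists2 w,
    (w - x <= K y)%MS & forall m, (k - d <= m < k)%N -> gap (w *m N ^+ m) = 0.
  by exists w => // m lt_m; apply/eqP; rewrite -subr_eq0; apply/eqP/agree; lia.
elim=> [_|d IH lt_d].
  by exists x => [|m]; [rewrite subrr sub0mx | lia].
have [w xw agree] := IH (ltnW lt_d); pose S := (k - d.+1)%N.
pose c := gap (w *m N ^+ S) / gap (y *m N ^+ k.-1).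
exists (w - c *: (y *m N ^+ d)).
  rewrite addrAC; apply: addmx_sub => //; rewrite -scaleNr; apply: scalemx_sub.
  exact: krylov_row.
move=> m /andP[le_m lt_m]; rewrite mulmxBl -scalemxAl -mulmx_exprD gapB.
have [lt_Sm|le_mS] := ltnP S m.
  rewrite (mulmx_expr_eq0 yNk); last by lia.
  by rewrite agree; [rewrite /gap !mxE subrr mulr0 subr0 | lia].
have -> : m = S by lia.
have -> : (d + S = k.-1)%N by lia.
by rewrite divfK ?subrr // subr_eq0.
Qed.

(* If the eigenvector at the bottom of a chain is constant, the chain is the
   full synchrony line: longer chains cannot end on it. *)
Lemma constant_bottom_sync y : chain_top N k y ->
  (forall i j, (y *m N ^+ k.-1) 0 i = (y *m N ^+ k.-1) 0 j) ->
  (K y == fullsync C n)%MS.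
Proof.
case/andP=> /eqP yNk yNk1 const.
have [lt_1k|le_k1] := ltnP 1 k.
  have ENk1 : y *m N ^+ k.-2 *m N = y *m N ^+ k.-1.
    by rewrite -mulmx_exprS; congr (_ *m _ ^+ _); lia.
  have yNk2 : y *m N ^+ k.-2 *m N *m N = 0 by rewrite ENk1 -mulmx_exprS prednK.
  have := sync_not_bottom yNk2; rewrite ENk1 => /(_ const) yNk10.
  by rewrite yNk10 eqxx in yNk1.
have k1 : k.-1 = 0%N by lia.
rewrite k1 expr0 mulmx1 in const yNk1.
have /rV0Pn[i yi] := yNk1.
have Ey : y = y 0 i *: fullsync C n by apply/rowP => j; rewrite !mxE mulr1 (const j i).
have row_y (r : 'I_k) : row r (K y) = y by rewrite row_krylov k1 expr0 mulmx1.
apply/andP; split; first by apply/row_subP => r; rewrite row_y Ey scalemx_sub.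
apply: submx_trans (row_sub (Ordinal k_gt0) _); rewrite row_y.
by rewrite -[fullsync C n](scalerK yi) -Ey scalemx_sub.
Qed.

Definition separated x := #|[set p : 'I_n * 'I_n | ~~ pattern (K x) p.1 p.2]|.

Lemma separated_lt x y i j : subrel (pattern (K x)) (pattern (K y)) ->
  pattern (K y) i j -> ~~ pattern (K x) i j -> (separated y < separated x)%N.
Proof.
move=> sxy y_ij x_ij; apply: proper_card; apply/properP; split.
  by apply/subsetP => p; rewrite !inE; apply: contra; apply: sxy.
by exists (i, j); rewrite !inE /= ?y_ij ?x_ij.
Qed.

Lemma dominating_top x : chain_top N k x -> ~ special_top A lam k x ->
  exists y, [/\ chain_top N k y, subrel (pattern (K x)) (pattern (K y)),
    exists i j, pattern (K y) i j && ~~ pattern (K x) i j &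
    ~ (K y == fullsync C n)%MS].
Proof.
move=> top_x not_special; apply: NNPP => no_dom.
apply: not_special; split=> // y top_y sxy; apply: NNPP => not_alt.
apply: no_dom; exists y; split=> //; last by move=> y_sync; apply: not_alt; right.
apply: NNPP => no_pair; apply: not_alt; left => i j y_ij; apply: contraT => x_ij.
by exfalso; apply: no_pair; exists i, j; rewrite y_ij x_ij.
Qed.

Lemma refine_top x y : x *m N ^+ k = 0 -> chain_top N k y ->
  subrel (pattern (K x)) (pattern (K y)) -> ~ (K y == fullsync C n)%MS ->
  exists w, [/\ (w - x <= K y)%MS, subrel (pattern (K x)) (pattern (K w)) &
    exists i j, pattern (K w) i j && ~~ pattern (K x) i j].
Proof.
move=> xNk top_y sxy y_not_sync; have /andP[/eqP yNk _] := top_y.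
have [i0 [j0 sep]] : exists i0 j0, (y *m N ^+ k.-1) 0 i0 != (y *m N ^+ k.-1) 0 j0.
  apply: NNPP => no_sep; apply/y_not_sync/constant_bottom_sync => // i j.
  by apply: NNPP => ne; apply: no_sep; exists i, j; apply/eqP.
have [w xw agree] := merge_pair x yNk sep; exists w; split => //.
  move=> i j x_ij; apply/patternP => r; rewrite !krylov_entry.
  have split_w l : (w *m N ^+ (k.-1 - r)) 0 l =
      (x *m N ^+ (k.-1 - r)) 0 l + ((w - x) *m N ^+ (k.-1 - r)) 0 l.
    by rewrite -[in LHS](subrKC x w) mulmxDl mxE.
  rewrite !split_w; congr (_ + _); first by rewrite -!krylov_entry; move/patternP: x_ij.
  by apply: (pattern_submx (B := K y)); [apply: krylov_mulmx_expr | apply: sxy].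
exists i0, j0; apply/andP; split.
  by apply/patternP => r; rewrite !krylov_entry agree //; lia.
apply: contra sep => /sxy /patternP /(_ (Ordinal k_gt0)).
by rewrite !krylov_entry /= subn0 => ->.
Qed.

Definition level_spanned m (V : 'M[C]_(m, n)) := exists2 s : seq 'rV[C]_n,
  (forall y, y \in s -> special_top A lam k y) &
  (V <= kermx (N ^+ k.-1) + vspan s)%MS.

Lemma level_spanned_sub m1 m2 (U : 'M[C]_(m1, n)) (V : 'M[C]_(m2, n)) :
  (U <= V)%MS -> level_spanned V -> level_spanned U.
Proof. by move=> sUV [s special_s sV]; exists s => //; apply: submx_trans sV. Qed.

Lemma level_spanned_adds m1 m2 (U : 'M[C]_(m1, n)) (V : 'M[C]_(m2, n)) :
  level_spanned U -> level_spanned V -> level_spanned (U + V)%MS.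
Proof.
move=> [s1 special1 sU] [s2 special2 sV]; exists (s1 ++ s2).
  by move=> y; rewrite mem_cat => /orP[/special1|/special2].
rewrite vspan_cat addsmx_sub; apply/andP; split.
  by apply: submx_trans sU _; apply: addsmxS => //; apply: addsmxSl.
by apply: submx_trans sV _; apply: addsmxS => //; apply: addsmxSr.
Qed.

Lemma level_spanned_ker m (V : 'M[C]_(m, n)) :
  (V <= kermx (N ^+ k.-1))%MS -> level_spanned V.
Proof. by move=> sV; exists [::] => //; apply: submx_trans sV (addsmxSl _ _). Qed.

(* Every x with x N^k = 0 is level spanned, by induction on the number of
   pairs separated by x: a special top spans itself; otherwise x = w - (w - x)
   where w and the dominating top y of [dominating_top] separate fewer pairs
   and w - x lies in the Krylov space of y, hence in ker N^(k-1) + y. *)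
Lemma level_spanned_vec x : x *m N ^+ k = 0 -> level_spanned x.
Proof.
move: {2}(separated x).+1 (ltnSn (separated x)) => b.
elim: b x => // b IH x lt_xb xNk.
have [xNk1|xNk1] := eqVneq (x *m N ^+ k.-1) 0.
  by apply: level_spanned_ker; apply/sub_kermxP.
have top_x : chain_top N k x by rewrite /chain_top xNk eqxx xNk1.
have [special_x|not_special] := classic (special_top A lam k x).
  exists [:: x]; first by move=> y; rewrite inE => /eqP ->.
  by apply: submx_trans (addsmxSr _ _); apply: vspan_sup; rewrite mem_head.
have [y [top_y sxy [i [j /andP[y_ij x_ij]]] y_not_sync]] := dominating_top top_x not_special.
have [w [xw sxw [i' [j' /andP[w_ij x_ij']]]]] := refine_top xNk top_y sxy y_not_sync.
have /andP[/eqP yNk _] := top_y.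
have wNk : w *m N ^+ k = 0.
  by rewrite -(subrKC x w) mulmxDl xNk (krylov_ker yNk xw) addr0.
have [lt_yx lt_wx] := (separated_lt sxy y_ij x_ij, separated_lt sxw w_ij x_ij').
have span_w : level_spanned w by apply: IH wNk; lia.
have span_y : level_spanned y by apply: IH yNk; lia.
apply: (level_spanned_sub (V := (w + (kermx (N ^+ k.-1) + y))%MS)).
  rewrite -[x](subKr w) addmx_sub_adds ?eqmx_opp //.
  exact: submx_trans xw (krylov_sub_ker yNk).
by apply: level_spanned_adds => //; apply: level_spanned_adds => //; apply: level_spanned_ker.
Qed.

Lemma special_tops_span :
  exists2 s : seq 'rV[C]_n, (forall y, y \in s -> special_top A lam k y) &
    (kermx (N ^+ k) <= kermx (N ^+ k.-1) + vspan s)%MS.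
Proof.
apply: (level_spanned_sub (V := (\sum_(r < n) <<row r (kermx (N ^+ k))>>)%MS)).
  by apply/row_subP => r; apply: (sumsmx_sup r) => //; rewrite genmxE.
apply: big_ind => [|U V|r _]; first by apply: level_spanned_ker; rewrite sub0mx.
  exact: level_spanned_adds.
apply: level_spanned_sub (level_spanned_vec _); first by rewrite genmxE.
by apply/sub_kermxP; rewrite row_sub.
Qed.

End SpecialTopsSpan.

Section JordanBasis.
Variables (R : fieldType) (n : nat) (N : 'M[R]_n).
Implicit Types (s : seq 'rV[R]_n) (F : seq (nat * 'rV[R]_n)).
Local Notation Z k := (kermx (N ^+ k)).

Fixpoint indep_mod (Zm : 'M[R]_n) s : bool :=
  if s is u :: s' then ~~ (u <= Zm + vspan s')%MS && indep_mod Zm s' else true.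

Lemma rank_indep_mod Zm s :
  indep_mod Zm s -> \rank (Zm + vspan s)%MS = (\rank Zm + size s)%N.
Proof.
elim: s => [|u s IH] /=; first by rewrite vspan_nil addsmx0 addn0.
case/andP=> u_notin /IH rank_s; rewrite vspan_cons addsmxA [(Zm + _)%MS]addsmxC -addsmxA.
set W := (Zm + vspan s)%MS in u_notin rank_s *.
have lt_W : (\rank W < \rank (<<u>> + W))%N.
  have [le_W eq_W] := mxrank_leqif_sup (addsmxSr <<u>>%MS W).
  by rewrite ltn_neqAle le_W eq_W addsmx_sub submx_refl !andbT genmxE.
have le_sum : (\rank (<<u>> + W) <= \rank <<u>> + \rank W)%N := mxrank_adds_leqif _ _.
have rank_u : (\rank <<u>> <= 1)%N by rewrite mxrank_gen rank_leq_row.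
by rewrite rank_s in lt_W le_sum *; lia.
Qed.

Lemma indep_mod_extend Zm L s : indep_mod Zm L -> exists T,
  [/\ {subset T <= s}, indep_mod Zm (T ++ L) & (vspan s <= Zm + vspan (T ++ L))%MS].
Proof.
move=> indepL; elim: s => [|u s [T [sTs indepT spanT]]].
  by exists [::]; split=> //; rewrite vspan_nil sub0mx.
have [u_in|u_notin] := boolP (u <= Zm + vspan (T ++ L))%MS.
  exists T; split=> //; first by move=> t /sTs; rewrite inE orbC => ->.
  by rewrite vspan_cons addsmx_sub spanT andbT genmxE.
exists (u :: T); split; first by move=> t; rewrite !inE => /orP[->|/sTs ->]; rewrite ?orbT.
  by rewrite /= u_notin indepT.
rewrite /= !vspan_cons addsmx_sub; apply/andP; split.
  by apply: submx_trans (addsmxSr _ _); apply: addsmxSl.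
by apply: submx_trans spanT _; apply: addsmxS => //; apply: addsmxSr.
Qed.

Lemma indep_mod_mulN k s : indep_mod (Z k.+1) s -> indep_mod (Z k) [seq u *m N | u <- s].
Proof.
elim: s => //= u s IH /andP[u_notin /IH ->]; rewrite andbT; apply: contra u_notin.
have sNs : (vspan [seq u *m N | u <- s] <= vspan s *m N)%MS.
  by apply: vspan_subP => _ /mapP[u' s_u' ->]; apply: submxMr; apply: vspan_sup.
move=> /submx_trans/(_ (addsmxS (submx_refl (Z k)) sNs)) /sub_addsmxP[[a b] /= uN].
have -> : u = (u - b *m vspan s) + b *m vspan s by rewrite subrK.
apply: addmx_sub_adds; last exact: submxMl.
apply/sub_kermxP; rewrite exprS -mulmxE mulmxA mulmxBl uN -mulmxA addrK.
by rewrite -mulmxA mulmx_ker mulmx0.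
Qed.

Lemma ker_exprS_eqmx k s : (forall u, u \in s -> (u <= Z k.+1)%MS) ->
  (Z k.+1 <= Z k + vspan s)%MS -> (Z k.+1 :=: Z k + vspan s)%MS.
Proof.
move=> s_ker span_s; apply/eqmxP/andP; split => //.
rewrite addsmx_sub vspan_subP // andbT.
by apply/sub_kermxP; rewrite exprSr -mulmxE mulmxA mulmx_ker mul0mx.
Qed.

(* Chains are given by pairs (length, top).  We build a family of chains with
   tops satisfying [good_top], from the longest down to the shortest. *)
Variable good_top : nat -> 'rV[R]_n -> Prop.
Hypothesis good_top_ker : forall k x, good_top k x -> x *m N ^+ k = 0.
Hypothesis good_tops_span : forall k, (0 < k)%N -> exists2 s,
  (forall y, y \in s -> good_top k y) & (Z k <= Z k.-1 + vspan s)%MS.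

(* The vectors of the chains of F at height k above their bottom... *)
Definition level_vectors k F := [seq p.2 *m N ^+ (p.1 - k) | p <- F].
(* ... and the part of the chains of F lying strictly above level k. *)
Definition chains_above k F : 'M[R]_n :=
  (\sum_(p <- F) \sum_(e < p.1 - k) <<p.2 *m N ^+ e>>)%MS.

Lemma level_vectors_mulN k F : (forall p, p \in F -> (k.+1 < p.1)%N) ->
  level_vectors k.+1 F = [seq u *m N | u <- level_vectors k.+2 F].
Proof.
move=> F_gt; rewrite /level_vectors -map_comp; apply/eq_in_map => p Fp /=.
by rewrite -mulmx_exprS subnSK // F_gt.
Qed.

Lemma chains_above_pred k F : (forall p, p \in F -> (k < p.1)%N) ->
  chains_above k F = (chains_above k.+1 F + vspan (level_vectors k.+1 F))%MS.
Proof.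
move=> F_gt; rewrite /chains_above /vspan big_map -big_split /= !big_seq.
apply: eq_bigr => p Fp; have := F_gt p Fp => lt_kp.
by rewrite (_ : p.1 - k = (p.1 - k.+1).+1)%N ?big_ord_recr //; lia.
Qed.

Lemma sum_lengths_pred k F : (forall p, p \in F -> (k < p.1)%N) ->
  (\sum_(p <- F) (p.1 - k) = \sum_(p <- F) (p.1 - k.+1) + size F)%N.
Proof.
move=> F_gt; rewrite -sum1_size -big_split /= !big_seq; apply: eq_bigr => p Fp.
by have := F_gt p Fp; case: p {Fp} => a x /=; lia.
Qed.

Definition partial_basis k F :=
  [/\ forall p, p \in F -> good_top p.1 p.2 /\ (k < p.1)%N,
      indep_mod (Z k) (level_vectors k.+1 F),
      (Z n <= Z k + chains_above k F)%MS &
      \rank (Z n) = (\rank (Z k) + \sum_(p <- F) (p.1 - k))%N].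

(* Going down one level: the vectors at height k+1 of the old chains remain
   independent modulo ker N^k, and are completed into a basis of ker N^(k+1)
   modulo ker N^k by good tops of new chains of length k+1. *)
Lemma partial_basis_pred k F : partial_basis k.+1 F -> exists F', partial_basis k F'.
Proof.
case=> F_good indepF spanF rankF.
have F_gt p : p \in F -> (k.+1 < p.1)%N by move=> /F_good[].
have F_gt' p : p \in F -> (k < p.1)%N by move=> /F_gt /ltnW.
set L := level_vectors k.+1 F.
have indepL : indep_mod (Z k) L by rewrite /L level_vectors_mulN //; apply: indep_mod_mulN.
have [s good_s span_s] := good_tops_span (ltn0Sn k).
have [T [sTs indepTL spanT]] := indep_mod_extend s indepL.
have L_ker u : u \in L -> (u <= Z k.+1)%MS.
  move=> /mapP[p Fp ->]; apply/sub_kermxP; rewrite -mulmx_exprD subnK.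
    by apply: good_top_ker; case: (F_good p Fp).
  exact: ltnW (F_gt p Fp).
have EZ : (Z k.+1 :=: Z k + vspan (T ++ L))%MS.
  apply: ker_exprS_eqmx; last by apply: submx_trans span_s _; rewrite addsmx_sub addsmxSl.
  move=> u; rewrite mem_cat => /orP[/sTs/good_s/good_top_ker uN|/L_ker //].
  exact/sub_kermxP.
pose Fnew := [seq (k.+1, t) | t <- T].
have level_new : level_vectors k.+1 Fnew = T.
  by rewrite /level_vectors -map_comp -[RHS]map_id; apply: eq_map => t /=; rewrite subnn mulmx1.
have chains_new : chains_above k Fnew = vspan T.
  by rewrite /chains_above big_map; apply: eq_bigr => t _; rewrite subSnn big_ord1 mulmx1.
exists (Fnew ++ F); split.
- move=> p; rewrite mem_cat => /orP[/mapP[t Tt ->]|Fp]; first by split=> //; apply/good_s/sTs.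
  by have [good_p _] := F_good p Fp; split=> //; apply: F_gt'.
- by rewrite /level_vectors map_cat -!/(level_vectors _ _) level_new.
- apply: submx_trans spanF _; rewrite /chains_above big_cat /= -!/(chains_above _ _).
  rewrite chains_new (chains_above_pred F_gt') -/L addsmx_sub EZ vspan_cat.
  apply/andP; split; first by do 2!apply: addsmxS => //; apply: addsmxSr.
  by do 2!apply: submx_trans (addsmxSr _ _); apply: addsmxSl.
- rewrite rankF EZ rank_indep_mod // size_cat /L size_map big_cat big_map /=.
  by rewrite subSnn sum1_size (sum_lengths_pred F_gt'); lia.
Qed.

Lemma chain_basis : exists F, [/\ forall p, p \in F -> good_top p.1 p.2,
  (Z n <= \sum_(p <- F) <<krylov N p.1 p.2>>)%MS &
  \rank (Z n) = \sum_(p <- F) p.1]%N.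
Proof.
have [F [F_good _ spanF rankF]] : exists F, partial_basis 0 F.
  suff /(_ n (leqnn n)) : forall d, (d <= n)%N -> exists F, partial_basis (n - d) F.
    by rewrite subnn.
  elim=> [_|d IH lt_dn].
    by exists [::]; rewrite subn0; split=> //; [apply: addsmxSl | rewrite big_nil addn0].
  have [F baseF] := IH (ltnW lt_dn).
  by rewrite (_ : n - d = (n - d.+1).+1)%N in baseF; [apply: partial_basis_pred baseF | lia].
have Z0 : Z 0 = 0 by apply/eqP; rewrite expr0 kermx_eq0 row_free_unit unitmx1.
exists F; split; first by move=> p /F_good[].
  apply: submx_trans spanF _; rewrite Z0 adds0mx_id /chains_above.
  apply: (big_ind2 (fun X Y : 'M[R]_n => (X <= Y)%MS)) => // [X1 X2 Y1 Y2|p _].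
    exact: addsmxS.
  by apply/sumsmx_subP => e _; rewrite !genmxE krylov_row // (leq_trans (ltn_ord e)) ?leq_subr.
by rewrite rankF Z0 mxrank0 add0n; apply: eq_bigr => p _; rewrite subn0.
Qed.

End JordanBasis.

(* Over an algebraically closed field, C^n is the direct sum of the
   generalized eigenspaces of any g, since the minimal polynomial of g divides
   the product of the (X - lam)^n over the distinct eigenvalues lam. *)
Lemma geigenspace_decomposition (C : closedFieldType) n (g : 'M[C]_n.+1) :
  exists r (lam : 'I_r -> C),
    (\sum_(i < r) geigenspace g (lam i) :=: 1%:M)%MS /\
    mxdirect (\sum_(i < r) geigenspace g (lam i)).
Proof.
have [rs Ers] := closed_field_poly_normal (char_poly g).
rewrite (monicP (char_poly_monic g)) scale1r in Ers.
have size_rs : size rs = n.+1.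
  by have := size_char_poly g; rewrite Ers size_prod_XsubC => -[].
set s := undup rs; exists (size s), (fun i => s`_i).
have inj_s : {in predT &, injective (fun i : 'I_(size s) => s`_i)}.
  by move=> i j _ _ /eqP; rewrite nth_uniq ?undup_uniq // => /eqP; apply: val_inj.
split; last exact: mxdirect_sum_geigenspace.
have coprime_s : {in predT &, forall i j : 'I_(size s), j != i ->
    coprimep (('X - (s`_i)%:P) ^+ n.+1) (('X - (s`_j)%:P) ^+ n.+1)}.
  move=> i j _ _ ji; rewrite coprimep_expr ?coprimep_expl // coprimep_XsubC root_XsubC.
  by apply: contra ji => /eqP /(inj_s _ _ isT isT) ->.
have min_dvd : mxminpoly g %| \prod_(i : 'I_(size s) | predT i) ('X - (s`_i)%:P) ^+ n.+1.
  apply: dvdp_trans (mxminpoly_dvd_char g) _.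
  rewrite Ers -prodr_undup_exp_count -/s (big_nth 0) big_mkord.
  apply: (big_ind2 (fun p q : {poly C} => p %| q)) => // [p1 p2 q1 q2|i _].
    exact: dvdp_mul.
  by apply: dvdp_exp2l; rewrite -size_rs count_size.
exact: eqmx_trans (eqmx_sym (kermxpoly_prod g coprime_s)) (kermxpoly_min min_dvd).
Qed.

Lemma refine_direct_decomposition (K : fieldType) n r (G : 'I_r -> 'M[K]_n)
    (Js : 'I_r -> seq 'M[K]_n) :
  (\sum_(i < r) G i :=: 1%:M)%MS -> mxdirect (\sum_(i < r) G i) ->
  (forall i, G i <= \sum_(J <- Js i) J)%MS ->
  (forall i, \sum_(J <- Js i) \rank J <= \rank (G i))%N ->
  exists m (J : 'I_m -> 'M[K]_n), [/\ forall t, exists i, J t \in Js i,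
    mxdirect (\sum_(t < m) J t) & (\sum_(t < m) J t == 1%:M)%MS].
Proof.
move=> full direct cover rank_le.
pose L := flatten [seq Js i | i <- index_enum 'I_r]; exists (size L), (nth 0 L).
have sumL R idx (op : Monoid.com_law idx) (f : 'M[K]_n -> R) :
    \big[op/idx]_(t < size L) f (nth 0 L t) =
    \big[op/idx]_(i < r) \big[op/idx]_(J <- Js i) f J.
  by rewrite -(big_mkord xpredT (f \o nth 0 L)) -(big_nth 0 xpredT f) big_flatten big_map.
have spanL : (1%:M <= \sum_(t < size L) nth 0 L t)%MS.
  by rewrite (sumL _ _ _ id) -full; apply: sumsmxS => i _; apply: cover.
split; last by rewrite submx1.
  by move=> t; have /flattenP[Ji /mapP[i _ ->] JiJ] := mem_nth 0 (ltn_ord t); exists i.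
rewrite mxdirectEgeq /= (sumL _ _ _ mxrank).
have -> : \rank (\sum_(t < size L) nth 0 L t) = n.
  by apply/eqP; rewrite eqn_leq rank_leq_col -{1}(mxrank1 K n) mxrankS.
apply: (@leq_trans (\sum_(i < r) \rank (G i))); first exact: leq_sum.
by move: direct; rewrite mxdirectE /= => /eqP <-; rewrite full mxrank1.
Qed.

Lemma special_chain_basis (C : numClosedFieldType) n (A : 'M[nat]_n) v (lam : C) :
  (forall i, (\sum_(j < n) A i j)%N = v) ->
  let N := (adjC C A - lam%:M)^T in
  exists F : seq (nat * 'rV[C]_n),
    [/\ forall p, p \in F -> special_top (adjC C A) lam p.1 p.2,
        (kermx (N ^+ n) <= \sum_(p <- F) <<krylov N p.1 p.2>>)%MS &
        \rank (kermx (N ^+ n)) = \sum_(p <- F) p.1]%N.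
Proof.
move=> rowsumA N; apply: chain_basis => [k x [/andP[/eqP xNk _] _] // | k k_gt0].
by apply: special_tops_span => // z; apply: (sync_not_chain_bottom (C := C) rowsumA).
Qed.

Theorem mainTheorem6 (C : numClosedFieldType) (n : nat) (A : 'M[nat]_n) :
  regular_network A ->
  exists (m : nat) (J : 'I_m -> 'M[C]_n),
    (forall i : 'I_m, exists lam : C, special_jordan (adjC C A) lam (J i)) /\
    mxdirect (\sum_(i < m) J i)%MS /\
    ((\sum_(i < m) J i)%MS == 1%:M)%MS.
Proof.
move=> [v]; case: n A => [|n] A rowsumA.
  exists 0%N, (fun _ => 0); split; first by case.
  split; first by rewrite mxdirectE /= !big_ord0 mxrank0.
  by rewrite [X in (X == _)%MS]thinmx0 [X in (_ == X)%MS]thinmx0 /= submx_refl.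
pose g := (adjC C A)^T.
have Eg lam : (adjC C A - lam%:M)^T = g - lam%:M by rewrite linearB /= tr_scalar_mx.
have [r [lam [full direct]]] := geigenspace_decomposition g.
have /fin_all_exists[F basisF] := fun i => special_chain_basis (lam i) rowsumA.
pose Js i := [seq <<krylov (g - (lam i)%:M) p.1 p.2>>%MS | p <- F i].
have [||m [J [JF directJ fullJ]]] := refine_direct_decomposition (Js := Js) full direct.
- by move=> i; rewrite geigenspaceE /Js big_map -Eg; case: (basisF i).
- move=> i; rewrite geigenspaceE /Js big_map -Eg; case: (basisF i) => _ _ ->.
  by apply: leq_sum => p _; rewrite mxrank_gen rank_leq_row.
exists m, J; split=> // t; have [i /mapP[p Fp ->]] := JF t; exists (lam i).
by rewrite -Eg; apply: special_top_special; case: (basisF i) => /(_ p Fp).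
Qed.
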